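(* Let $\Phi=\forall u_1\ldots\forall u_n\exists e_1(D_1)\ldots\exists e_m(D_m).\varphi$ be a DQBF with existential variables $E$, and let $<_E$ be a linear ordering of $E$. Then $\Phi$ is true if and only if for each $e\in E$ there is a propositional formula $\psi_e$ with $\mathit{var}(\psi_e)\subseteq D(e)\cup\{x\in E\mid D(x)\subseteq D(e),\ x<_E e\}$ such that $\neg\varphi\wedge\bigwedge_{e\in E}(e\leftrightarrow\psi_e)$ is unsatisfiable.
   Context: For a set $V$ of variables, $[V]$ is the set of all assignments $V\to\{\textsc{true},\textsc{false}\}$, and $\sigma|_W$ denotes restriction. A DQBF in prenex CNF is $\Phi=\forall u_1\ldots\forall u_n\exists e_1(D_1)\ldots\exists e_m(D_m).\varphi$ where all $u_i,e_j$ are pairwise distinct variables, $U=\{u_1,\dots,u_n\}$, $E=\{e_1,\dots,e_m\}$, each $D_j\subseteq U$ is the dependency set $D(e_j)$, and $\varphi$ is a CNF with $\mathit{var}(\varphi)\subseteq U\cup E$. A model of $\Phi$ is a family $F=(f_e)_{e\in E}$ of functions $f_e:[D(e)]\to\{\textsc{true},\textsc{false}\}$ such that for every $\sigma\in[U]$ the assignment $\sigma\cup F(\sigma)$ satisfies $\varphi$, where $F(\sigma)$ assigns each $e\in E$ the value $f_e(\sigma|_{D(e)})$. $\Phi$ is true if it has a model and false otherwise. *)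

From mathcomp Require Import all_boot.
Set Implicit Arguments. Unset Strict Implicit. Unset Printing Implicit Defensive.

Section DQBF.
Variable V : finType.

(* Assignments [V] are total functions V -> bool; restriction is implicit. *)
Definition assignment := V -> bool.

(* CNF: a literal is (variable, polarity); true polarity = positive literal. *)
Definition literal := (V * bool)%type.
Definition clause := seq literal.
Definition cnf := seq clause.

Definition lit_sat (a : assignment) (l : literal) : bool := a l.1 == l.2.
Definition clause_sat (a : assignment) (c : clause) : bool := has (lit_sat a) c.
Definition cnf_sat (a : assignment) (phi : cnf) : bool := all (clause_sat a) phi.

Definition cnf_vars (phi : cnf) : seq V := [seq l.1 | l <- flatten phi].

Definition wf_dqbf (U E : {set V}) (D : V -> {set V}) (phi : cnf) : Prop :=
  [disjoint U & E] /\ (forall e, e \in E -> D e \subset U) /\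
  (forall x, x \in cnf_vars phi -> x \in U :|: E).

(* F(σ) extended: σ ∪ F(σ). Values of σ outside U are never read, since
   var(phi) ⊆ U ∪ E and each f e depends only on D e ⊆ U. *)
Definition extend (E : {set V}) (f : V -> assignment -> bool) (s : assignment)
  : assignment := fun x => if x \in E then f x s else s x.

(* A model: f e : [D(e)] -> bool, i.e. a function of σ depending only on σ|_{D e}. *)
Definition is_model (U E : {set V}) (D : V -> {set V}) (phi : cnf)
  (f : V -> assignment -> bool) : Prop :=
  (forall e, e \in E -> forall s s' : assignment,
      (forall u, u \in D e -> s u = s' u) -> f e s = f e s') /\
  (forall s : assignment, cnf_sat (extend E f s) phi).

Definition dqbf_true (U E : {set V}) (D : V -> {set V}) (phi : cnf) : Prop :=
  exists f, is_model U E D phi f.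

Inductive form : Type :=
| FVar : V -> form
| FTrue : form
| FFalse : form
| FNot : form -> form
| FAnd : form -> form -> form
| FOr : form -> form -> form.

Fixpoint form_eval (a : assignment) (p : form) : bool :=
  match p with
  | FVar x => a x
  | FTrue => true
  | FFalse => false
  | FNot q => ~~ form_eval a q
  | FAnd q r => form_eval a q && form_eval a r
  | FOr q r => form_eval a q || form_eval a r
  end.

Fixpoint form_vars (p : form) : seq V :=
  match p with
  | FVar x => [:: x]
  | FTrue | FFalse => [::]
  | FNot q => form_vars q
  | FAnd q r | FOr q r => form_vars q ++ form_vars r
  end.

Definition linear_order_on (E : {set V}) (lt : rel V) : Prop :=
  (forall x, x \in E -> ~~ lt x x) /\
  (forall x y z, x \in E -> y \in E -> z \in E -> lt x y -> lt y z -> lt x z) /\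
  (forall x y, x \in E -> y \in E -> x != y -> lt x y || lt y x).

End DQBF.

(* If F is a model, each Skolem function f_e is a Boolean function of the
   variables D(e), hence expressible as a formula psi_e over D(e) (its DNF);
   any assignment satisfying all e <-> psi_e then agrees with sigma ∪ F(sigma)
   and so satisfies phi.  Conversely, each psi_e mentions only universals of
   D(e) and existentials that are <_E-smaller with smaller dependency sets,
   so the system e <-> psi_e is acyclic: for every universal assignment it is
   solved by iterating the definitions along the rank of <_E, and the value
   obtained for e depends only on D(e).  This solution is a model, since by
   unsatisfiability it cannot falsify phi. *)

From mathcomp Require Import all_boot.

Set Implicit Arguments.
Unset Strict Implicit.
Unset Printing Implicit Defensive.

Section Formulas.
Variable V : finType.

Lemma eq_form_eval (a b : assignment V) p :
  {in form_vars p, a =1 b} -> form_eval a p = form_eval b p.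
Proof.
elim: p => [x | | | q IHq | q IHq r IHr | q IHq r IHr] //= eq_ab.
- by apply: eq_ab; rewrite inE.
- by rewrite IHq.
- by rewrite IHq ?IHr // => x x_in; apply: eq_ab; rewrite mem_cat x_in ?orbT.
- by rewrite IHq ?IHr // => x x_in; apply: eq_ab; rewrite mem_cat x_in ?orbT.
Qed.

Lemma eq_cnf_sat (a b : assignment V) phi : a =1 b -> cnf_sat a phi = cnf_sat b phi.
Proof. by move=> eq_ab; apply: eq_all => c; apply: eq_has => l; rewrite /lit_sat eq_ab. Qed.

Definition form_ands (ps : seq (form V)) : form V := foldr (@FAnd V) (@FTrue V) ps.
Definition form_ors (ps : seq (form V)) : form V := foldr (@FOr V) (@FFalse V) ps.

Lemma form_eval_ands a ps : form_eval a (form_ands ps) = all (form_eval a) ps.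
Proof. by elim: ps => //= p ps ->. Qed.

Lemma form_eval_ors a ps : form_eval a (form_ors ps) = has (form_eval a) ps.
Proof. by elim: ps => //= p ps ->. Qed.

Lemma form_vars_ands x ps :
  (x \in form_vars (form_ands ps)) = has (fun p => x \in form_vars p) ps.
Proof. by elim: ps => //= p ps IH; rewrite mem_cat IH. Qed.

Lemma form_vars_ors x ps :
  (x \in form_vars (form_ors ps)) = has (fun p => x \in form_vars p) ps.
Proof. by elim: ps => //= p ps IH; rewrite mem_cat IH. Qed.

Definition form_lit (x : V) (b : bool) : form V := if b then FVar x else FNot (FVar x).

Definition minterm (S : {set V}) (b : assignment V) : form V :=
  form_ands [seq form_lit x (b x) | x <- enum S].

Lemma form_eval_minterm a S b :
  form_eval a (minterm S b) = all (fun x => a x == b x) (enum S).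
Proof.
rewrite /minterm form_eval_ands all_map; apply: eq_all => x /=.
by rewrite /form_lit; case: (b x) => /=; case: (a x).
Qed.

Lemma form_vars_minterm S b x : x \in form_vars (minterm S b) -> x \in S.
Proof.
rewrite /minterm form_vars_ands has_map => /hasP[y y_S].
by rewrite /form_lit /=; case: (b y) => /=; rewrite inE => /eqP ->; rewrite -mem_enum.
Qed.

Definition dnf_of (S : {set V}) (g : assignment V -> bool) : form V :=
  form_ors [seq minterm S b | b : {ffun V -> bool} <- enum {ffun V -> bool} & g b].

Lemma form_vars_dnf_of S g x : x \in form_vars (dnf_of S g) -> x \in S.
Proof. by rewrite /dnf_of form_vars_ors has_map => /hasP[b _ /form_vars_minterm]. Qed.

Lemma form_eval_dnf_of (S : {set V}) (g : assignment V -> bool) a :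
  (forall s s' : assignment V, {in S, s =1 s'} -> g s = g s') ->
  form_eval a (dnf_of S g) = g a.
Proof.
move=> g_dep; rewrite /dnf_of form_eval_ors has_map.
apply/hasP/idP => [[b] | ga].
  rewrite mem_filter => /andP[gb _] /=; rewrite form_eval_minterm => /allP a_b.
  by rewrite (g_dep _ b) // => x x_S; apply/eqP/a_b; rewrite mem_enum.
exists [ffun x => a x]; last first.
  by rewrite /= form_eval_minterm; apply/allP => x _; rewrite ffunE.
by rewrite mem_filter mem_enum andbT -(g_dep a) // => x _; rewrite ffunE.
Qed.

End Formulas.

Section AcyclicDefinitions.
Variables (V : finType) (E : {set V}) (psi : V -> form V).

Definition solve_step (s a : assignment V) : assignment V :=
  fun x => if x \in E then form_eval a (psi x) else s x.

(* Existentials start at [false], so the iterates never read [s] on [E]. *)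
Definition solve_iter (s : assignment V) (k : nat) : assignment V :=
  iter k (solve_step s) (fun x => (x \notin E) && s x).

Lemma solve_iter_notin s k x : x \notin E -> solve_iter s k x = s x.
Proof. by case: k => [|k] /= xNE; rewrite ?/solve_step ?xNE ?(negbTE xNE). Qed.

Lemma solve_iterS_mem s k e :
  e \in E -> solve_iter s k.+1 e = form_eval (solve_iter s k) (psi e).
Proof. by rewrite /= /solve_step => ->. Qed.

Section Rank.
Variable rk : V -> nat.
Hypothesis rk_psi : forall e x,
  e \in E -> x \in E -> x \in form_vars (psi e) -> rk x < rk e.

Lemma solve_iter_stable s k e :
  e \in E -> rk e < k -> solve_iter s k e = solve_iter s k.+1 e.
Proof.
elim: k e => [|k IH] e eE // rk_e; rewrite !solve_iterS_mem //.
apply: eq_form_eval => x x_psi; have [xE | xNE] := boolP (x \in E).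
  by apply: IH; last exact: leq_trans (rk_psi eE xE x_psi) rk_e.
by rewrite !solve_iter_notin.
Qed.

Lemma solve_iter_solution s k :
  (forall e, e \in E -> rk e < k) ->
  forall e, e \in E -> solve_iter s k e = form_eval (solve_iter s k) (psi e).
Proof.
by move=> rk_lt e eE; rewrite solve_iter_stable ?rk_lt ?solve_iterS_mem.
Qed.

End Rank.

Section Dependency.
Variable D : V -> {set V}.
Hypothesis psi_dep : forall e x, e \in E -> x \in form_vars (psi e) ->
  if x \in E then D x \subset D e else x \in D e.

Lemma solve_iter_dep k e (s s' : assignment V) :
  e \in E -> {in D e, s =1 s'} -> solve_iter s k e = solve_iter s' k e.
Proof.
elim: k e => [|k IH] e eE eq_ss'; first by rewrite /= eE.
rewrite !solve_iterS_mem //; apply: eq_form_eval => x /(psi_dep eE).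
case: ifPn => [xE /subsetP sub_De | xNE /eq_ss'].
  by apply: IH => // u /sub_De /eq_ss'.
by rewrite !solve_iter_notin.
Qed.

End Dependency.
End AcyclicDefinitions.

Definition order_rank (V : finType) (E : {set V}) (lt : rel V) (x : V) : nat :=
  #|[set y in E | lt y x]|.

Lemma order_rank_lt (V : finType) (E : {set V}) (lt : rel V) x e :
  linear_order_on E lt -> x \in E -> e \in E -> lt x e ->
  order_rank E lt x < order_rank E lt e.
Proof.
move=> [irr [trans _]] xE eE lt_xe; apply/proper_card/properP; split.
  by apply/subsetP => y; rewrite !inE => /andP[yE lt_yx]; rewrite yE (trans y x e).
by exists x; rewrite !inE ?xE ?lt_xe // (negbTE (irr x xE)).
Qed.

Section SkolemDefinitions.
Variables (V : finType) (U E : {set V}) (D : V -> {set V}) (phi : cnf V).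

Lemma model_dnf_definitions_unsat f :
  is_model U E D phi f ->
  ~ (exists a : assignment V, ~~ cnf_sat a phi /\
       (forall e, e \in E -> a e = form_eval a (dnf_of (D e) (f e)))).
Proof.
move=> [f_dep f_sat] [a [a_unsat a_def]]; move/negP: a_unsat; apply.
rewrite -(@eq_cnf_sat _ (extend E f a)) // => x; rewrite /extend.
by case: ifPn => // xE; rewrite a_def // form_eval_dnf_of // => s s'; apply: f_dep.
Qed.

Lemma acyclic_definitions_model (ltE : rel V) (psi : V -> form V) :
  wf_dqbf U E D phi -> linear_order_on E ltE ->
  (forall e, e \in E -> forall x, x \in form_vars (psi e) ->
     x \in D e \/ [/\ x \in E, D x \subset D e & ltE x e]) ->
  ~ (exists a : assignment V, ~~ cnf_sat a phi /\
       (forall e, e \in E -> a e = form_eval a (psi e))) ->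
  is_model U E D phi (fun e s => solve_iter E psi s #|V|.+1 e).
Proof.
move=> [dis_UE [D_U _]] ltE_order psi_vars psi_unsat.
have D_notin e x : e \in E -> x \in D e -> x \notin E.
  by move=> eE /(subsetP (D_U e eE)) xU; rewrite (disjointFr dis_UE xU).
split=> [e eE s s' | s].
  apply: solve_iter_dep => // e' x e'E /(psi_vars e' e'E) [xD | [xE D_sub _]].
    by rewrite (negbTE (D_notin e' x e'E xD)).
  by rewrite xE.
apply/negPn/negP => unsat_s; apply: psi_unsat.
exists (solve_iter E psi s #|V|.+1); split.
  move: unsat_s; rewrite (@eq_cnf_sat _ _ (solve_iter E psi s #|V|.+1)) // => x.
  by rewrite /extend; case: ifPn => // xNE; rewrite solve_iter_notin.
apply: (solve_iter_solution (rk := order_rank E ltE)) => [e x eE xE x_psi | e _].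
  case: (psi_vars e eE x x_psi) => [xD | [_ _]]; last exact: order_rank_lt.
  by have := D_notin e x eE xD; rewrite xE.
by rewrite ltnS max_card.
Qed.

End SkolemDefinitions.

Theorem lemma3 (V : finType) (U E : {set V}) (D : V -> {set V}) (phi : cnf V)
    (ltE : rel V) :
  wf_dqbf U E D phi ->
  linear_order_on E ltE ->
  dqbf_true U E D phi <->
  exists psi : V -> form V,
    (forall e, e \in E -> forall x, x \in form_vars (psi e) ->
        x \in D e \/ [/\ x \in E, D x \subset D e & ltE x e]) /\
    (* ¬φ ∧ ⋀_{e∈E} (e ↔ ψ_e) is unsatisfiable *)
    ~ (exists a : assignment V,
         ~~ cnf_sat a phi /\ (forall e, e \in E -> a e = form_eval a (psi e))).
Proof.
move=> wf ltE_order; split => [[f f_model] | [psi [psi_vars psi_unsat]]].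
  exists (fun e => dnf_of (D e) (f e)); split.
    by move=> e _ x /form_vars_dnf_of; left.
  exact: model_dnf_definitions_unsat f_model.
by eexists; exact: acyclic_definitions_model wf ltE_order psi_vars psi_unsat.
Qed.
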